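(* Let $\bm{H}_1,\dots,\bm{H}_N$ be random matrices with values in $\mathbb{C}^{N_R\times N_T}$ (sub-channels of a frequency-selective MIMO channel), let $W,\rho>0$, and let $c=\frac{W}{N}\sum_{j=1}^N\log_2\det(\bm{I}_{N_R}+\frac{\rho}{N_T}\bm{H}_j\bm{H}_j^\ast)$ be the capacity when channel side information is known only at the receiver. If for every $j\in\{1,\dots,N\}$ there is $\theta>0$ with $\mathbb{E}\big[\prod_{i=1}^{r(\bm{H}_j)}(1+\lambda_i^j)^\theta\big]<\infty$, where $r(\bm{H}_j)$ is the rank of $\bm{H}_j$ and $\lambda_i^j$ are the (positive) eigenvalues of $\bm{H}_j\bm{H}_j^\ast$, then the distribution of $c$ is light-tailed.
   Context: A nonnegative random variable $X$ is light-tailed if $\Pr(X>x)=O(e^{-\theta x})$ for some $\theta>0$, equivalently $\mathbb{E}[e^{\theta X}]<\infty$ for some $\theta>0$. *)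

From HB Require Import structures.
From mathcomp Require Import all_boot all_order all_algebra.
From mathcomp Require Import all_classical all_reals all_analysis.
From mathcomp Require Import complex.
Set Implicit Arguments. Unset Strict Implicit. Unset Printing Implicit Defensive.
Import Order.TTheory GRing.Theory Num.Theory.
Local Open Scope ring_scope.
Local Open Scope classical_set_scope.

Definition ctrmx (R : rcfType) (m n : nat) (A : 'M[R[i]]_(m, n)) : 'M[R[i]]_(n, m) :=
  (map_mx (@conjc R) A)^T.

Lemma char_poly_splits (F : closedFieldType) (n : nat) (A : 'M[F]_n) :
  exists s : seq F, char_poly A == \prod_(z <- s) ('X - z%:P).
Proof.
have [s Hs] := closed_field_poly_normal (char_poly A).
exists s; rewrite {1}Hs.
by rewrite (eqP (char_poly_monic A)) scale1r.
Qed.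

Definition eigenvalues (F : closedFieldType) (n : nat) (A : 'M[F]_n) : seq F :=
  xchoose (char_poly_splits A).

(* prod_{i=1}^{r(H)} (1 + lambda_i)^theta, lambda_i ranging over the positive
   eigenvalues (with multiplicity) of H H^* *)
Definition pos_eig_prod (R : realType) (m n : nat) (H : 'M[R[i]]_(m, n)) (theta : R) : R :=
  \prod_(l <- eigenvalues (H *m ctrmx H) | 0 < l) powR (1 + complex.Re l) theta.

Definition log2 (R : realType) (x : R) : R := ln x / ln 2.

(* c = W/N sum_j log2 det(I + rho/N_T H_j H_j^* ) (the determinant is a positive real) *)
Definition capacity (R : realType) (NR NT N : nat) (W rho : R)
    (H : 'I_N -> 'M[R[i]]_(NR, NT)) : R :=
  W / N%:R * \sum_(j < N)
     log2 (complex.Re (\det (1%:M + real_complex R (rho / NT%:R) *: (H j *m ctrmx (H j))))).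

Definition random_cmatrix (d : measure_display) (T : measurableType d) (R : realType)
    (m n : nat) (H : T -> 'M[R[i]]_(m, n)) : Prop :=
  forall (a : 'I_m) (b : 'I_n),
    measurable_fun setT (fun w => complex.Re (H w a b)) /\
    measurable_fun setT (fun w => complex.Im (H w a b)).

Definition light_tailed (d : measure_display) (T : measurableType d) (R : realType)
    (P : probability T R) (X : T -> R) : Prop :=
  exists theta : R, 0 < theta /\
    exists K x0 : R, forall x : R, x0 <= x ->
      (P [set w | (x < X w)%R] <= (K * expR (- (theta * x)))%:E)%E.

(* The eigenvalues of [H H^*] are nonnegative reals, so
   [det (I + c H H^* ) = prod_i (1 + c lambda_i)] lies between [1] and
   [max(1, c)^N_R prod_(lambda_i > 0) (1 + lambda_i)].  Markov's inequality for
   the [theta]-th power of the latter product therefore gives each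
   log-determinant an exponential tail.  The capacity exceeds [x] only if some
   sub-channel has [ln det (I + rho/N_T H_j H_j^* ) > x ln 2 / W], and a union
   bound over the [N] sub-channels yields a light tail whose rate is any
   positive lower bound of the [theta_j ln 2 / W]. *)

From HB Require Import structures.
From mathcomp Require Import all_boot all_order all_algebra.
From mathcomp Require Import all_classical all_reals all_analysis.
From mathcomp Require Import complex.
From mathcomp Require Import ring.
Set Implicit Arguments. Unset Strict Implicit. Unset Printing Implicit Defensive.
Import Order.TTheory GRing.Theory Num.Theory measurable_realfun.
Local Open Scope ring_scope.

Lemma prodr_ege1 (R : numDomainType) (I : Type) (r : seq I) (P : pred I) (F : I -> R) :
  (forall i, P i -> 1 <= F i) -> 1 <= \prod_(i <- r | P i) F i.
Proof. by move=> F1; apply: (big_ind (fun x => 1 <= x)) => //; exact: mulr_ege1. Qed.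

Lemma powR_prod (R : realType) (I : Type) (r : seq I) (P : pred I) (F : I -> R) (t : R) :
  (forall i, P i -> 0 <= F i) ->
  (\prod_(i <- r | P i) F i) `^ t = \prod_(i <- r | P i) F i `^ t.
Proof.
move=> F0; suff [] : 0 <= \prod_(i <- r | P i) F i /\
    (\prod_(i <- r | P i) F i) `^ t = \prod_(i <- r | P i) F i `^ t by [].
apply: (big_ind2 (fun a b => 0 <= a /\ a `^ t = b)).
- by rewrite powR1.
- by move=> a1 b1 a2 b2 [a10 <-] [a20 <-]; rewrite mulr_ge0 // powRM.
- by move=> i Pi; rewrite F0.
Qed.

Lemma prod_1DM_le (R : realDomainType) (r : seq R) (c : R) : 0 < c ->
  {in r, forall x, 0 <= x} ->
  \prod_(x <- r) (1 + c * x) <= Num.max 1 c ^+ size r * \prod_(x <- r | 0 < x) (1 + x).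
Proof.
move=> c0 r0; set K := Num.max 1 c.
have K1 : 1 <= K by rewrite le_max lexx.
have Kc : c <= K by rewrite le_max lexx orbT.
have -> : K ^+ size r = \prod_(x <- r) K.
  by rewrite big_const_seq count_predT iter_mulr_1.
rewrite [X in _ * X]big_mkcond -big_split /= big_seq [X in _ <= X]big_seq.
apply: ler_prod => x /r0 x0; rewrite addr_ge0 ?mulr_ge0 ?(ltW c0) //=.
have [xpos|xle0] := boolP (0 < x).
  by rewrite mulrDr mulr1 lerD // ler_wpM2r.
have -> : x = 0 by apply: le_anti; rewrite x0 andbT leNgt.
by rewrite mulr0 addr0 mulr1.
Qed.

Lemma exists_ltr_of_ltr_sum (R : realDomainType) (I : finType) (G F : I -> R) :
  \sum_i G i < \sum_i F i -> exists i, G i < F i.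
Proof.
move=> GF; apply: contrapT => noGF; move: GF; apply/negP; rewrite -leNgt.
by apply: ler_sum => i _; rewrite leNgt; apply/negP => GFi; apply: noGF; exists i.
Qed.

(* The [1 +] makes the witness work for an empty family as well. *)
Lemma exists_gt0_lower_bound (R : realFieldType) (I : finType) (b : I -> R) :
  (forall i, 0 < b i) -> exists2 e, 0 < e & forall i, e <= b i.
Proof.
move=> b0; have s0 : 0 <= \sum_i (b i)^-1 by apply: sumr_ge0 => i _; rewrite invr_ge0 ltW.
have s1 : 0 < 1 + \sum_i (b i)^-1 by rewrite ltr_wpDr.
exists (1 + \sum_i (b i)^-1)^-1; first by rewrite invr_gt0.
move=> i; rewrite -[b i]invrK lef_pV2 ?posrE ?invr_gt0 //.
rewrite (bigD1 i) //= addrCA lerDl addr_ge0 //.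
by apply: sumr_ge0 => j _; rewrite invr_ge0 ltW.
Qed.

Lemma eigenvaluesE (F : closedFieldType) n (M : 'M[F]_n) :
  char_poly M = \prod_(z <- eigenvalues M) ('X - z%:P).
Proof. exact/eqP/(xchooseP (char_poly_splits M)). Qed.

Lemma size_eigenvalues (F : closedFieldType) n (M : 'M[F]_n) :
  size (eigenvalues M) = n.
Proof.
by have := size_char_poly M; rewrite eigenvaluesE size_prod_XsubC => -[].
Qed.

Lemma horner_char_poly (F : fieldType) n (M : 'M[F]_n) (x : F) :
  (char_poly M).[x] = \det (x%:M - M).
Proof.
rewrite /char_poly -horner_evalE -(det_map_mx (horner_eval x)).
congr (\det _); apply/matrixP => i j; rewrite !mxE /= horner_evalE.
by rewrite hornerD hornerN hornerMn hornerX hornerC.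
Qed.

Lemma det_1DZ (F : closedFieldType) n (M : 'M[F]_n) (a : F) : a != 0 ->
  \det (1%:M + a *: M) = \prod_(z <- eigenvalues M) (1 + a * z).
Proof.
move=> a0; have -> : 1%:M + a *: M = (- a) *: ((- a^-1)%:M - M).
  by rewrite scalerBr -[(- a^-1)%:M]scalemx1 scalerA mulrNN divff // scale1r scaleNr opprK.
rewrite detZ; have -> : (- a) ^+ n = \prod_(z <- eigenvalues M) (- a).
  by rewrite big_const_seq count_predT iter_mulr_1 size_eigenvalues.
rewrite -horner_char_poly eigenvaluesE horner_prod -big_split /=.
by apply: eq_bigr => z _; rewrite hornerXsubC mulrBr mulrNN divff // mulNr opprK.
Qed.

Section Gram.
Variable R : rcfType.

Lemma mulmx_ctrmx_row_ge0 n (w : 'rV[R[i]]_n) : 0 <= (w *m ctrmx w) 0 0.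
Proof.
rewrite !mxE; apply: sumr_ge0 => k _; rewrite !mxE; exact: mulcJ_ge0.
Qed.

Lemma mulmx_ctrmx_row_gt0 n (w : 'rV[R[i]]_n) : w != 0 -> 0 < (w *m ctrmx w) 0 0.
Proof.
move=> w0; rewrite lt_def mulmx_ctrmx_row_ge0 andbT; apply: contraNneq w0.
rewrite !mxE; under eq_bigr do rewrite !mxE.
move=> /psumr_eq0P w2; apply/eqP/matrixP => i k; rewrite mxE (ord1 i).
have /eqP := w2 (fun j _ => mulcJ_ge0 _) k isT.
by rewrite mulf_eq0 conjc_eq0 orbb => /eqP.
Qed.

Lemma eigenvalues_gram_ge0 m n (H : 'M[R[i]]_(m, n)) :
  {in eigenvalues (H *m ctrmx H), forall z, 0 <= z}.
Proof.
move=> z; rewrite -root_prod_XsubC -eigenvaluesE -eigenvalue_root_char.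
move=> /eigenvalueP [v hv v0].
have vHE : (v *m H) *m ctrmx (v *m H) = z *: (v *m ctrmx v).
  by rewrite {1}/ctrmx map_mxM trmx_mul !mulmxA -[v *m H *m _]mulmxA hv -scalemxAl.
move/matrixP: vHE => /(_ 0 0); rewrite [in RHS]mxE => zE.
have vv0 := mulmx_ctrmx_row_gt0 v0.
by rewrite -(mulfK (lt0r_neq0 vv0) z) -zE divr_ge0 ?mulmx_ctrmx_row_ge0 ?ltW.
Qed.

End Gram.

Lemma complex_ge0E (R : rcfType) (z : R[i]) : 0 <= z ->
  z = real_complex R (complex.Re z) /\ 0 <= complex.Re z.
Proof. by case: z => a b; rewrite lecE /= => /andP[/eqP -> ->]. Qed.

Definition gram_eigenvalues (R : rcfType) m n (H : 'M[R[i]]_(m, n)) : seq R :=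
  map (@complex.Re R) (eigenvalues (H *m ctrmx H)).

Section GramEigenvalues.
Variables (R : rcfType) (m n : nat) (H : 'M[R[i]]_(m, n)).

Lemma eigenvalues_gramE :
  eigenvalues (H *m ctrmx H) = map (real_complex R) (gram_eigenvalues H).
Proof.
rewrite -map_comp; apply/esym/map_id_in => z /eigenvalues_gram_ge0.
by case/complex_ge0E.
Qed.

Lemma gram_eigenvalues_ge0 : {in gram_eigenvalues H, forall x, 0 <= x}.
Proof. by move=> _ /mapP[z /eigenvalues_gram_ge0 /complex_ge0E[_ ?] ->]. Qed.

Lemma size_gram_eigenvalues : size (gram_eigenvalues H) = m.
Proof. by rewrite size_map size_eigenvalues. Qed.

Lemma Re_det_1DZ_gram (c : R) : c != 0 ->
  complex.Re (\det (1%:M + real_complex R c *: (H *m ctrmx H))) =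
  \prod_(x <- gram_eigenvalues H) (1 + c * x).
Proof.
move=> c0; rewrite det_1DZ ?eigenvalues_gramE; last by rewrite eq_complex /= negb_and c0.
rewrite big_map (eq_bigr (fun x => real_complex R (1 + c * x))) -?rmorph_prod //.
by move=> x _; rewrite rmorphD rmorph1 rmorphM.
Qed.

End GramEigenvalues.

Lemma pos_eig_prodE (R : realType) m n (H : 'M[R[i]]_(m, n)) (t : R) :
  pos_eig_prod H t = (\prod_(x <- gram_eigenvalues H | 0 < x) (1 + x)) `^ t.
Proof.
rewrite powR_prod => [|x x0]; last by rewrite addr_ge0 // ltW.
rewrite /pos_eig_prod eigenvalues_gramE !big_map; apply: eq_bigl => x.
by rewrite ltcE /= eqxx.
Qed.

Definition det_I_gram (R : realType) m n (c : R) (H : 'M[R[i]]_(m, n)) : R :=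
  complex.Re (\det (1%:M + real_complex R c *: (H *m ctrmx H))).

Section DetIGram.
Variables (R : realType) (m n : nat) (c : R) (H : 'M[R[i]]_(m, n)).
Hypothesis c0 : 0 < c.

Lemma det_I_gram_ge1 : 1 <= det_I_gram c H.
Proof.
rewrite /det_I_gram Re_det_1DZ_gram ?lt0r_neq0 // big_seq.
by apply: prodr_ege1 => x /gram_eigenvalues_ge0 x0; rewrite lerDl mulr_ge0 // ltW.
Qed.

Lemma det_I_gram_le :
  det_I_gram c H <= Num.max 1 c ^+ m * \prod_(x <- gram_eigenvalues H | 0 < x) (1 + x).
Proof.
rewrite /det_I_gram Re_det_1DZ_gram ?lt0r_neq0 // -{2}(size_gram_eigenvalues H).
exact: prod_1DM_le (@gram_eigenvalues_ge0 _ _ _ H).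
Qed.

End DetIGram.

Section ComplexMeasurable.
Context (d : measure_display) (T : measurableType d) (R : realType).
Implicit Types f g : T -> R[i].

Definition cmeasurable f :=
  measurable_fun setT (fun w => complex.Re (f w)) /\
  measurable_fun setT (fun w => complex.Im (f w)).

Lemma cmeasurable_cst (a : R[i]) : cmeasurable (fun=> a).
Proof. by split; exact: measurable_cst. Qed.

Lemma cmeasurableD f g : cmeasurable f -> cmeasurable g -> cmeasurable (fun w => f w + g w).
Proof.
move=> [f1 f2] [g1 g2]; split.
- rewrite (_ : (fun w => _) = (fun w => complex.Re (f w) + complex.Re (g w))).
    exact: measurable_funD.
  by apply: funext => w; case: (f w) => ? ?; case: (g w) => ? ?.
- rewrite (_ : (fun w => _) = (fun w => complex.Im (f w) + complex.Im (g w))).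
    exact: measurable_funD.
  by apply: funext => w; case: (f w) => ? ?; case: (g w) => ? ?.
Qed.

Lemma cmeasurableM f g : cmeasurable f -> cmeasurable g -> cmeasurable (fun w => f w * g w).
Proof.
move=> [f1 f2] [g1 g2]; split.
- rewrite (_ : (fun w => _) = (fun w => complex.Re (f w) * complex.Re (g w) -
                                        complex.Im (f w) * complex.Im (g w))).
    by apply: measurable_funB; exact: measurable_funM.
  by apply: funext => w; case: (f w) => ? ?; case: (g w) => ? ?.
- rewrite (_ : (fun w => _) = (fun w => complex.Re (f w) * complex.Im (g w) +
                                        complex.Im (f w) * complex.Re (g w))).
    by apply: measurable_funD; exact: measurable_funM.
  by apply: funext => w; case: (f w) => ? ?; case: (g w) => ? ?.
Qed.

Lemma cmeasurable_conj f : cmeasurable f -> cmeasurable (fun w => (f w)^*%C).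
Proof.
move=> [f1 f2]; split.
- by rewrite (_ : (fun w => _) = (fun w => complex.Re (f w)));
    last by apply: funext => w; case: (f w).
- rewrite (_ : (fun w => _) = (fun w => - complex.Im (f w))); first exact: measurableT_comp.
  by apply: funext => w; case: (f w).
Qed.

Lemma cmeasurable_sum (I : Type) (r : seq I) (P : pred I) (F : I -> T -> R[i]) :
  (forall i, cmeasurable (F i)) -> cmeasurable (fun w => \sum_(i <- r | P i) F i w).
Proof.
move=> F_meas; elim: r => [|i r IH].
  by under eq_fun do rewrite big_nil; exact: cmeasurable_cst.
by under eq_fun do rewrite big_cons; case: (P i) => //; exact: cmeasurableD.
Qed.

Lemma cmeasurable_prod (I : Type) (r : seq I) (P : pred I) (F : I -> T -> R[i]) :
  (forall i, cmeasurable (F i)) -> cmeasurable (fun w => \prod_(i <- r | P i) F i w).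
Proof.
move=> F_meas; elim: r => [|i r IH].
  by under eq_fun do rewrite big_nil; exact: cmeasurable_cst.
by under eq_fun do rewrite big_cons; case: (P i) => //; exact: cmeasurableM.
Qed.

Lemma cmeasurable_det n (A : T -> 'M[R[i]]_n) :
  (forall i j, cmeasurable (fun w => A w i j)) -> cmeasurable (fun w => \det (A w)).
Proof.
move=> A_meas; apply: cmeasurable_sum => s.
by apply: cmeasurableM; [exact: cmeasurable_cst | apply: cmeasurable_prod => i; exact: A_meas].
Qed.

Lemma measurable_det_I_gram m n (H : T -> 'M[R[i]]_(m, n)) (c : R) :
  random_cmatrix H -> measurable_fun setT (fun w => det_I_gram c (H w)).
Proof.
move=> H_meas; apply: (proj1 (cmeasurable_det _)) => i j; under eq_fun do rewrite !mxE.
apply: cmeasurableD; first exact: cmeasurable_cst.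
apply: cmeasurableM; first exact: cmeasurable_cst.
apply: cmeasurable_sum => k; apply: cmeasurableM; first exact: H_meas.
by under eq_fun do rewrite !mxE; apply: cmeasurable_conj; exact: H_meas.
Qed.

End ComplexMeasurable.

Section MeasureBounds.
Local Open Scope classical_set_scope.
Local Open Scope ereal_scope.
Context (d : measure_display) (T : measurableType d) (R : realType).
Variable mu : {measure set T -> \bar R}.

Lemma measurable_ltr_set (f : T -> R) (y : R) :
  measurable_fun setT f -> measurable [set w | (y < f w)%R].
Proof.
move=> mf; have := mf measurableT _ (measurable_itv `]y, +oo[%R); rewrite setTI.
by congr measurable; apply/seteqP; split => w /=; rewrite in_itv /= andbT.
Qed.

Lemma measure_le_sum_cover (I : finType) (A : set T) (F : I -> set T) :
  (forall i, measurable (F i)) -> measurable A -> A `<=` \bigcup_i F i ->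
  mu A <= \sum_i mu (F i).
Proof.
move=> mF mA AF; apply: le_trans (content_sub_fsum _ _ _ mA AF) _ => //.
  exact: finite_finset.
rewrite (fsbigE (enum I)) ?enum_uniq //; last by move=> i _; rewrite mem_enum.
by rewrite big_enum_cond; under eq_bigl do rewrite in_setT.
Qed.

(* No measurability of [f] is needed: [t] times the indicator of [A] is a
   simple function below [f]. *)
Lemma markov_ge0 (f : T -> R) (A : set T) (t : R) :
  measurable A -> (0 <= t)%R -> (forall w, 0 <= f w)%R ->
  (forall w, A w -> t <= f w)%R ->
  t%:E * mu A <= \int[mu]_w (f w)%:E.
Proof.
move=> mA t0 f0 tf; rewrite ge0_integralTE; last by move=> w; rewrite lee_fin.
apply: ereal_sup_ubound; exists (scale_nnsfun (indic_nnsfun R mA) t0).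
  move=> w /=; rewrite lee_fin mindicE.
  by case: (boolP (w \in A)) => [/set_mem /tf|_]; rewrite ?mulr1 ?mulr0.
by rewrite /= sintegralrM sintegral_indic.
Qed.

Lemma ln_tail_le (D Q : T -> R) (K th y : R) :
  measurable_fun setT D -> (0 < K)%R -> (0 < th)%R ->
  (forall w, 0 < D w)%R -> (forall w, D w <= K * Q w)%R ->
  mu [set w | (y < ln (D w))%R] <=
    (K `^ th * expR (- (th * y)))%:E * \int[mu]_w ((Q w) `^ th)%:E.
Proof.
move=> mD K0 th0 D0 DQ.
have mA := measurable_ltr_set y (measurableT_comp (@measurable_ln R) mD).
set t := (expR (y * th) / K `^ th)%R.
have t0 : (0 < t)%R by rewrite divr_gt0 ?expR_gt0 ?powR_gt0.
have tQ w : (y < ln (D w) -> t <= Q w `^ th)%R.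
  have Q0 : (0 < Q w)%R by rewrite -(pmulr_rgt0 _ K0) (lt_le_trans (D0 w)).
  move=> yD; rewrite ler_pdivrMr ?powR_gt0 // -powRM ?(ltW Q0) ?(ltW K0) // expRM.
  apply: (ge0_ler_powR (ltW th0)); rewrite ?nnegrE ?expR_ge0 ?mulr_ge0 ?(ltW Q0) ?(ltW K0) //.
  rewrite mulrC; apply: le_trans (DQ w); apply: ltW.
  by rewrite -ltr_expR lnK ?posrE in yD.
have -> : (K `^ th * expR (- (th * y)) = t^-1)%R.
  by rewrite invf_div expRN (mulrC th).
by rewrite (lee_pdivlMl _ _ t0); apply: markov_ge0 => // [|w]; [exact: ltW | exact: powR_ge0].
Qed.

End MeasureBounds.

Lemma capacity_gt_exists (R : realType) (NR NT N : nat) (W rho x : R)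
    (H : 'I_N -> 'M[R[i]]_(NR, NT)) : (0 < N)%N -> 0 < W ->
  x < capacity W rho H -> exists j, x * ln 2 / W < ln (det_I_gram (rho / NT%:R) (H j)).
Proof.
move=> N0 W0; rewrite /capacity /log2 -mulr_suml => xc.
apply: exists_ltr_of_ltr_sum; rewrite sumr_const card_ord -(mulr_natr (x * ln 2 / W)).
set s := \sum_j _ in xc *.
have ln20 : 0 < ln (2 : R) by rewrite ln_gt0 // ltr1n.
have k0 : 0 < ln 2 * N%:R / W by rewrite divr_gt0 // mulr_gt0 // ltr0n.
have sE (t : R) : W / N%:R * (t / ln 2) = t / (ln 2 * N%:R / W).
  by field; rewrite !lt0r_neq0 ?ltr0n.
rewrite sE ltr_pdivlMr // in xc.
by rewrite (_ : _ * N%:R = x * (ln 2 * N%:R / W)) //; ring.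
Qed.

Section CapacityTail.
Local Open Scope classical_set_scope.
Local Open Scope ereal_scope.
Context (d : measure_display) (T : measurableType d) (R : realType).
Variable mu : {measure set T -> \bar R}.

Lemma ln_det_I_gram_tail_le m n (H : T -> 'M[R[i]]_(m, n)) (c th y : R) :
  random_cmatrix H -> (0 < c)%R -> (0 < th)%R ->
  mu [set w | (y < ln (det_I_gram c (H w)))%R] <=
    ((Num.max 1 c ^+ m) `^ th * expR (- (th * y)))%:E *
    \int[mu]_w (pos_eig_prod (H w) th)%:E.
Proof.
move=> H_meas c0 th0; under eq_integral => w _ do rewrite pos_eig_prodE.
apply: ln_tail_le => // [||w|w].
- exact: measurable_det_I_gram.
- by rewrite exprn_gt0 // lt_max c0 orbT.
- by rewrite (lt_le_trans ltr01) // det_I_gram_ge1.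
- exact: det_I_gram_le.
Qed.

Lemma measurable_capacity (NR NT N : nat) (W rho : R)
    (H : 'I_N -> T -> 'M[R[i]]_(NR, NT)) :
  (forall j, random_cmatrix (H j)) ->
  measurable_fun setT (fun w => capacity W rho (fun j => H j w)).
Proof.
move=> H_meas; apply: measurable_funM; first exact: measurable_cst.
apply: measurable_sum => j; apply: measurable_funM; last exact: measurable_cst.
exact: measurableT_comp (@measurable_ln R) (measurable_det_I_gram _ (H_meas j)).
Qed.

Lemma capacity_tail_le (NR NT N : nat) (W rho x : R)
    (H : 'I_N -> T -> 'M[R[i]]_(NR, NT)) (th : 'I_N -> R) :
  (0 < NT)%N -> (0 < N)%N -> (0 < W)%R -> (0 < rho)%R -> (forall j, 0 < th j)%R ->
  (forall j, random_cmatrix (H j)) ->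
  mu [set w | (x < capacity W rho (fun j => H j w))%R] <=
    \sum_j ((Num.max 1 (rho / NT%:R) ^+ NR) `^ th j *
             expR (- (th j * (x * ln 2 / W))))%:E *
           \int[mu]_w (pos_eig_prod (H j w) (th j))%:E.
Proof.
move=> NT0 N0 W0 rho0 th0 H_meas.
have c0 : (0 < rho / NT%:R)%R by rewrite divr_gt0 // ltr0n.
pose A j := [set w | (x * ln 2 / W < ln (det_I_gram (rho / NT%:R) (H j w)))%R].
apply: le_trans (measure_le_sum_cover mu (F := A) _ _ _) _.
- move=> j; apply: measurable_ltr_set.
  exact: measurableT_comp (@measurable_ln R) (measurable_det_I_gram _ (H_meas j)).
- exact/measurable_ltr_set/measurable_capacity.
- by move=> w /capacity_gt_exists [] // j; exists j.
- by apply: lee_sum => j _; exact: ln_det_I_gram_tail_le.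
Qed.

End CapacityTail.

Theorem theorem4 (d : measure_display) (T : measurableType d) (R : realType)
    (P : probability T R) (NR NT N : nat) (W rho : R)
    (H : 'I_N -> T -> 'M[R[i]]_(NR, NT)) :
  (0 < NR)%N -> (0 < NT)%N -> (0 < N)%N -> 0 < W -> 0 < rho ->
  (forall j : 'I_N, random_cmatrix (H j)) ->
  (forall j : 'I_N, exists theta : R, 0 < theta /\
     (\int[P]_w (pos_eig_prod (H j w) theta)%:E < +oo)%E) ->
  light_tailed P (fun w => capacity W rho (fun j => H j w)).
Proof.
move=> _ NT0 N0 W0 rho0 H_meas H_int.
have [th thP] := choice H_int; have th0 j : 0 < th j := (thP j).1.
pose I j := (\int[P]_w (pos_eig_prod (H j w) (th j))%:E)%E.
have I0 j : (0 <= I j)%E.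
  by apply: integral_ge0 => w _; rewrite lee_fin pos_eig_prodE powR_ge0.
have I_fin j : I j \is a fin_num by rewrite ge0_fin_numE ?(thP j).2.
pose M j := (Num.max 1 (rho / NT%:R) ^+ NR) `^ th j * fine (I j).
have [e e0 e_le] : exists2 e, 0 < e & forall j, e <= th j * ln 2 / W.
  by apply: exists_gt0_lower_bound => j; rewrite divr_gt0 // mulr_gt0 // ln_gt0 // ltr1n.
exists e; split => //; exists (\sum_j M j), 0 => x x0.
apply: le_trans (capacity_tail_le P x NT0 N0 W0 rho0 th0 H_meas) _.
rewrite mulr_suml -sumEFin; apply: lee_sum => j _.
rewrite -/(I j) -(fineK (I_fin j)) -EFinM lee_fin mulrAC.
apply: ler_wpM2l; first by rewrite mulr_ge0 ?powR_ge0 ?fine_ge0.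
rewrite ler_expR lerN2 (_ : th j * _ = th j * ln 2 / W * x); last by ring.
exact: ler_wpM2r.
Qed.
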